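(* Let $s=a+ib$ with $a\ge1$, $b\in\mathbb{R}$, and let $k\in[0,1)$ satisfy $|b/s|\le k$. Let $g$ be analytic in $\mathbb{D}^*$ with $g(\zeta)=\zeta+\frac{d}{\zeta}+\cdots$ near $\infty$, satisfying for all $\zeta\in\mathbb{D}^*\setminus\{\infty\}$ (the expression being defined and finite there) $$\left|ib+(1-|\zeta|^2)a\left\{(1-s)\left(1-\frac{\zeta g'(\zeta)}{g(\zeta)}\right)-s\frac{\zeta g''(\zeta)}{g'(\zeta)}\right\}\right|\le ak|s|-|b|(a-1).$$ Then for every $R>1$ the function $g_R(\zeta)=\frac1R g(R\zeta)$ is analytic in $\mathbb{D}^*$, has the form $\zeta+\frac{d'}{\zeta}+\cdots$ near $\infty$, and satisfies the same inequality (with $g$ replaced by $g_R$) for all $\zeta\in\mathbb{D}^*\setminus\{\infty\}$.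
   Context: $\mathbb{D}^*=\{\zeta\in\mathbb{C}\cup\{\infty\}:|\zeta|>1\}$. *)

From Stdlib Require Import Reals.
Open Scope R_scope.

Definition Cx : Type := (R * R)%type.
Definition RtoC (x : R) : Cx := (x, 0).
Definition Ci : Cx := (0, 1).
Definition Cadd (z w : Cx) : Cx := (fst z + fst w, snd z + snd w).
Definition Copp (z : Cx) : Cx := (- fst z, - snd z).
Definition Csub (z w : Cx) : Cx := Cadd z (Copp w).
Definition Cmul (z w : Cx) : Cx :=
  (fst z * fst w - snd z * snd w, fst z * snd w + snd z * fst w).
Definition Cinv (z : Cx) : Cx :=
  let n := fst z * fst z + snd z * snd z in (fst z / n, - snd z / n).
Definition Cdiv (z w : Cx) : Cx := Cmul z (Cinv w).
Definition Cnorm (z : Cx) : R := sqrt (fst z * fst z + snd z * snd z).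
Definition C0 : Cx := RtoC 0.
Definition C1 : Cx := RtoC 1.

Definition is_cderiv (f : Cx -> Cx) (l z : Cx) : Prop :=
  forall eps : R, 0 < eps -> exists del : R, 0 < del /\
    forall h : Cx, 0 < Cnorm h < del ->
      Cnorm (Csub (Cdiv (Csub (f (Cadd z h)) (f z)) h) l) < eps.

(* holomorphic (= analytic) on a set U (used only for open sets) *)
Definition holo_on (U : Cx -> Prop) (f : Cx -> Cx) : Prop :=
  forall z, U z -> exists l, is_cderiv f l z.

(* finite part of the exterior disk D^* = {|z| > 1} *)
Definition Dstar (z : Cx) : Prop := 1 < Cnorm z.

(* g is analytic in D^* including the point at infinity, with an expansion
   g(z) = z + d/z + ... near infinity: there are r > 0 and phi analytic on
   |w| < r with phi(0) = 0 and g(z) = z + phi(1/z) for |z| > 1/r. *)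
Definition expansion_at_infty (g : Cx -> Cx) : Prop :=
  exists (r : R) (phi : Cx -> Cx), 0 < r /\
    holo_on (fun w => Cnorm w < r) phi /\ phi C0 = C0 /\
    forall z, 1 < r * Cnorm z -> g z = Cadd z (phi (Cinv z)).

Definition Expr (a b : R) (g g1 g2 : Cx -> Cx) (z : Cx) : Cx :=
  let s : Cx := (a, b) in
  Cadd (Cmul Ci (RtoC b))
    (Cmul (RtoC ((1 - Cnorm z ^ 2) * a))
       (Csub (Cmul (Csub C1 s) (Csub C1 (Cdiv (Cmul z (g1 z)) (g z))))
             (Cmul s (Cdiv (Cmul z (g2 z)) (g1 z))))).

(* the inequality of the statement, with g' = g1, g'' = g2, on D^* *)
Definition ineq_holds (a b k : R) (g g1 g2 : Cx -> Cx) : Prop :=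
  forall z, Dstar z ->
    g z <> C0 /\ g1 z <> C0 /\
    Cnorm (Expr a b g g1 g2 z) <= a * k * Cnorm (a, b) - Rabs b * (a - 1).

Definition rescale (Rr : R) (g : Cx -> Cx) : Cx -> Cx :=
  fun z => Cmul (RtoC (/ Rr)) (g (Cmul (RtoC Rr) z)).

(* The three claims follow from the chain rule for the linear map ζ ↦ Rζ.
   - g_R is analytic on D^*, because ζ ↦ Rζ maps D^* into D^* and
     g_R'(ζ) = g'(Rζ), g_R''(ζ) = R g''(Rζ).
   - If g(ζ) = ζ + φ(1/ζ) for |ζ| > 1/r, then g_R(ζ) = ζ + φ_R(1/ζ) with
     φ_R(u) = φ(u/R)/R, analytic on |u| < rR.
   - The two quotients ζ g_R'/g_R and ζ g_R''/g_R' at ζ equal the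
     quotients ζ g'/g and ζ g''/g' at w = Rζ, so the expression of the
     inequality is  ib + (1-|ζ|²) a K  with the same K as in the expression
     ib + (1-|w|²) a K  for g at w.  As a function of t = |ζ|² this is
     affine with value ib at t = 1, so its modulus on [1, |w|²] is bounded
     by the maximum of |b| and the value at |w|² = R²|ζ|²; both are at most
     the bound a k |s| - |b| (a - 1), the former because |b| <= k |s|. *)

From Pilot Require Import Defs.
From Stdlib Require Import Reals Lra Psatz Classical.
Open Scope R_scope.

Lemma pair_eq (x y x' y' : R) : x = x' -> y = y' -> (x, y) = (x', y').
Proof. intros -> ->; reflexivity. Qed.

Ltac componentwise := repeat match goal with p : Cx |- _ => destruct p end;
  unfold Csub, Cdiv in *; unfold Cadd, Copp, Cmul, Cinv, RtoC, C0, Defs.C1, Ci in *;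
  simpl in *; apply pair_eq.

Lemma Cnorm_nonneg (z : Cx) : 0 <= Cnorm z.
Proof. apply sqrt_pos. Qed.

Lemma Cnorm_mul (u v : Cx) : Cnorm (Cmul u v) = Cnorm u * Cnorm v.
Proof.
  unfold Cnorm. rewrite <- sqrt_mult by nra. f_equal.
  destruct u, v; unfold Cmul; simpl; ring.
Qed.

Lemma Cnorm_RtoC (c : R) : Cnorm (RtoC c) = Rabs c.
Proof.
  unfold Cnorm, RtoC; simpl. replace (c * c + 0 * 0) with (Rsqr c) by (unfold Rsqr; ring).
  apply sqrt_Rsqr_abs.
Qed.

Lemma Cnorm_scale (c : R) (z : Cx) : Cnorm (Cmul (RtoC c) z) = Rabs c * Cnorm z.
Proof. rewrite Cnorm_mul, Cnorm_RtoC; reflexivity. Qed.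

Lemma Cnorm_scale_pos (c : R) (z : Cx) : 0 <= c -> Cnorm (Cmul (RtoC c) z) = c * Cnorm z.
Proof. intro Hc. rewrite Cnorm_scale, Rabs_right by lra; reflexivity. Qed.

Lemma Cnorm_iR (b : R) : Cnorm (Cmul Ci (RtoC b)) = Rabs b.
Proof.
  rewrite Cnorm_mul, Cnorm_RtoC. unfold Ci, Cnorm; simpl.
  replace (0 * 0 + 1 * 1) with 1 by ring. rewrite sqrt_1; ring.
Qed.

Lemma Cnorm_opp (z : Cx) : Cnorm (Copp z) = Cnorm z.
Proof. unfold Cnorm, Copp; destruct z; simpl; f_equal; ring. Qed.

Lemma Cnorm_C0 : Cnorm C0 = 0.
Proof. unfold C0; rewrite Cnorm_RtoC, Rabs_R0; reflexivity. Qed.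

Lemma dot_le_sqrt (x1 y1 x2 y2 : R) :
  x1 * x2 + y1 * y2 <= sqrt ((x1 * x1 + y1 * y1) * (x2 * x2 + y2 * y2)).
Proof.
  destruct (Rle_or_lt (x1 * x2 + y1 * y2) 0).
  - pose proof (sqrt_pos ((x1 * x1 + y1 * y1) * (x2 * x2 + y2 * y2))); lra.
  - apply Rsqr_incr_0_var; [|apply sqrt_pos]. rewrite Rsqr_sqrt by nra. unfold Rsqr.
    pose proof (Rle_0_sqr (x1 * y2 - x2 * y1)); unfold Rsqr in *; nra.
Qed.

Lemma Cnorm_triangle (u v : Cx) : Cnorm (Cadd u v) <= Cnorm u + Cnorm v.
Proof.
  destruct u as [x1 y1], v as [x2 y2]. unfold Cadd, Cnorm; simpl.
  set (p := sqrt (x1 * x1 + y1 * y1)); set (q := sqrt (x2 * x2 + y2 * y2)).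
  assert (Hp : 0 <= p) by apply sqrt_pos. assert (Hq : 0 <= q) by apply sqrt_pos.
  assert (Hpp : p * p = x1 * x1 + y1 * y1) by (apply sqrt_sqrt; nra).
  assert (Hqq : q * q = x2 * x2 + y2 * y2) by (apply sqrt_sqrt; nra).
  assert (Hpq : x1 * x2 + y1 * y2 <= p * q)
    by (unfold p, q; rewrite <- sqrt_mult by nra; apply dot_le_sqrt).
  apply Rsqr_incr_0_var; [|nra].
  rewrite Rsqr_sqrt by (pose proof (Rle_0_sqr (x1 + x2)); pose proof (Rle_0_sqr (y1 + y2));
                         unfold Rsqr in *; lra).
  unfold Rsqr. nra.
Qed.

Lemma Cnorm_pos (z : Cx) : z <> C0 -> 0 < Cnorm z.
Proof.
  intro Hz. destruct (Cnorm_nonneg z) as [|E]; auto. exfalso; apply Hz. symmetry in E.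
  destruct z as [x y]; unfold Cnorm in E; simpl in E.
  apply sqrt_eq_0 in E; [|nra]. unfold C0, RtoC. apply pair_eq; nra.
Qed.

Lemma Cnorm2_neq0 (z : Cx) : z <> C0 -> fst z * fst z + snd z * snd z <> 0.
Proof.
  intros Hz E. pose proof (Cnorm_pos z Hz) as H. unfold Cnorm in H.
  rewrite E, sqrt_0 in H. lra.
Qed.

Lemma Cnorm_Cinv (z : Cx) : z <> C0 -> Cnorm (Cinv z) = / Cnorm z.
Proof.
  intro Hz. pose proof (Cnorm2_neq0 z Hz) as Hn. pose proof (Cnorm_pos z Hz).
  assert (E : Cmul z (Cinv z) = Defs.C1)
    by (destruct z as [x y]; simpl in *; componentwise; field; auto).
  assert (Hprod : Cnorm z * Cnorm (Cinv z) = 1)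
    by (rewrite <- Cnorm_mul, E; unfold Defs.C1; rewrite Cnorm_RtoC; apply Rabs_R1).
  field_simplify_eq; lra.
Qed.

Lemma Cinv_scale (c : R) (z : Cx) :
  c <> 0 -> z <> C0 -> Cinv (Cmul (RtoC c) z) = Cmul (RtoC (/ c)) (Cinv z).
Proof.
  intros Hc Hz. pose proof (Cnorm2_neq0 z Hz) as Hn.
  destruct z as [x y]; simpl in Hn. componentwise; field; repeat split; auto;
  replace (c * x * (c * x) + c * y * (c * y)) with (c * c * (x * x + y * y)) by ring;
  repeat apply Rmult_integral_contrapositive_currified; auto.
Qed.

Lemma deriv_scale (f : Cx -> Cx) (l z : Cx) (m c : R) :
  c <> 0 -> is_cderiv f l (Cmul (RtoC c) z) ->
  is_cderiv (fun w => Cmul (RtoC m) (f (Cmul (RtoC c) w))) (Cmul (RtoC (m * c)) l) z.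
Proof.
  intros Hc Hd eps He.
  set (K := Rabs (m * c) + 1).
  assert (HK : 0 < K) by (unfold K; pose proof (Rabs_pos (m * c)); lra).
  destruct (Hd (eps / K)) as [del [Hdel Hf]]; [apply Rdiv_lt_0_compat; auto|].
  assert (Hac : 0 < Rabs c) by (apply Rabs_pos_lt; auto).
  exists (del / Rabs c). split; [apply Rdiv_lt_0_compat; auto|].
  intros h [H1 H2].
  assert (Hch : 0 < Cnorm (Cmul (RtoC c) h) < del).
  { rewrite Cnorm_scale. split; [nra|].
    apply Rmult_lt_reg_l with (/ Rabs c); [apply Rinv_0_lt_compat; auto|].
    rewrite <- Rmult_assoc, Rinv_l by lra. unfold Rdiv in H2. lra. }
  specialize (Hf _ Hch).
  assert (Hh : h <> C0) by (intro E; rewrite E, Cnorm_C0 in H1; lra).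
  pose proof (Cnorm2_neq0 h Hh) as Hn.
  set (Q := Csub (Cdiv (Csub (f (Cadd (Cmul (RtoC c) z) (Cmul (RtoC c) h)))
                              (f (Cmul (RtoC c) z))) (Cmul (RtoC c) h)) l) in Hf.
  assert (EQ : Csub (Cdiv (Csub (Cmul (RtoC m) (f (Cmul (RtoC c) (Cadd z h))))
                 (Cmul (RtoC m) (f (Cmul (RtoC c) z)))) h) (Cmul (RtoC (m * c)) l)
               = Cmul (RtoC (m * c)) Q).
  { unfold Q.
    replace (Cmul (RtoC c) (Cadd z h)) with (Cadd (Cmul (RtoC c) z) (Cmul (RtoC c) h))
      by (componentwise; ring).
    generalize (f (Cadd (Cmul (RtoC c) z) (Cmul (RtoC c) h))) (f (Cmul (RtoC c) z)).
    intros u v. destruct h as [h1 h2]; simpl in Hn. componentwise; field; repeat split; auto;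
    replace (c * h1 * (c * h1) + c * h2 * (c * h2)) with (c * c * (h1 * h1 + h2 * h2)) by ring;
    repeat apply Rmult_integral_contrapositive_currified; auto. }
  rewrite EQ, Cnorm_scale.
  pose proof (Rabs_pos (m * c)). pose proof (Cnorm_nonneg Q).
  apply Rle_lt_trans with (K * Cnorm Q); [unfold K; nra|].
  apply Rmult_lt_reg_l with (/ K); [apply Rinv_0_lt_compat; auto|].
  rewrite <- Rmult_assoc, Rinv_l by lra. unfold Rdiv in Hf. lra.
Qed.

Lemma deriv_unique (f : Cx -> Cx) (l l' z : Cx) :
  is_cderiv f l z -> is_cderiv f l' z -> l = l'.
Proof.
  intros H1 H2. destruct (classic (l = l')) as [|Hne]; auto. exfalso.
  assert (Hsub : Csub l l' <> C0).
  { intro E. apply Hne. destruct l, l'; unfold Csub, Cadd, Copp, C0, RtoC in E; simpl in E.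
    injection E; intros; apply pair_eq; lra. }
  pose proof (Cnorm_pos _ Hsub) as He.
  destruct (H1 (Cnorm (Csub l l') / 2)) as [d1 [Hd1 F1]]; [lra|].
  destruct (H2 (Cnorm (Csub l l') / 2)) as [d2 [Hd2 F2]]; [lra|].
  pose proof (Rmin_glb_lt d1 d2 0 Hd1 Hd2). pose proof (Rmin_l d1 d2). pose proof (Rmin_r d1 d2).
  set (h := RtoC (Rmin d1 d2 / 2)).
  assert (Nh : Cnorm h = Rmin d1 d2 / 2) by (unfold h; rewrite Cnorm_RtoC; apply Rabs_right; lra).
  specialize (F1 h ltac:(lra)). specialize (F2 h ltac:(lra)).
  set (Q := Cdiv (Csub (f (Cadd z h)) (f z)) h) in *.
  (* l - l' = (Q - l') - (Q - l), each of modulus < |l - l'|/2 *)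
  assert (E : Csub l l' = Cadd (Csub Q l') (Copp (Csub Q l))) by (clear; componentwise; ring).
  pose proof (Cnorm_triangle (Csub Q l') (Copp (Csub Q l))) as T.
  rewrite Cnorm_opp, <- E in T. lra.
Qed.

Lemma deriv_local (f G : Cx -> Cx) (l z : Cx) (rho : R) : 0 < rho ->
  (forall h, Cnorm h < rho -> f (Cadd z h) = G (Cadd z h)) ->
  is_cderiv f l z -> is_cderiv G l z.
Proof.
  intros Hr Heq Hd eps He. destruct (Hd eps He) as [d [Hd0 F]].
  exists (Rmin d rho). split; [apply Rmin_glb_lt; auto|].
  intros h [H1 H2]. pose proof (Rmin_l d rho). pose proof (Rmin_r d rho).
  assert (Ez : f z = G z).
  { replace z with (Cadd z C0) by (componentwise; ring). apply Heq. rewrite Cnorm_C0; auto. }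
  rewrite <- Ez, <- Heq by lra. apply F. lra.
Qed.

Lemma Dstar_scale (Rr : R) (z : Cx) : 1 <= Rr -> Dstar z -> Dstar (Cmul (RtoC Rr) z).
Proof. unfold Dstar; intros HR Hz. rewrite Cnorm_scale_pos by lra. nra. Qed.

Lemma Dstar_open (z : Cx) : Dstar z ->
  forall h, Cnorm h < Cnorm z - 1 -> Dstar (Cadd z h).
Proof.
  unfold Dstar; intros Hz h Hh.
  pose proof (Cnorm_triangle (Cadd z h) (Copp h)) as T. rewrite Cnorm_opp in T.
  replace (Cadd (Cadd z h) (Copp h)) with z in T by (componentwise; ring). lra.
Qed.

Lemma rescale_deriv (Rr : R) (g : Cx -> Cx) (l z : Cx) :
  0 < Rr -> is_cderiv g l (Cmul (RtoC Rr) z) -> is_cderiv (rescale Rr g) l z.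
Proof.
  intros HR Hd. pose proof (deriv_scale g l z (/ Rr) Rr ltac:(lra) Hd) as H.
  rewrite Rinv_l in H by lra. replace l with (Cmul (RtoC 1) l) by (componentwise; ring).
  exact H.
Qed.

Lemma rescale_holo (Rr : R) (g : Cx -> Cx) :
  1 <= Rr -> holo_on Dstar g -> holo_on Dstar (rescale Rr g).
Proof.
  intros HR Hg z Hz. destruct (Hg _ (Dstar_scale Rr z HR Hz)) as [l Hl].
  exists l. apply rescale_deriv; [lra | exact Hl].
Qed.

Lemma rescale_first_deriv (Rr : R) (g g1 h1 : Cx -> Cx) :
  1 <= Rr -> (forall w, Dstar w -> is_cderiv g (g1 w) w) ->
  (forall z, Dstar z -> is_cderiv (rescale Rr g) (h1 z) z) ->
  forall z, Dstar z -> h1 z = g1 (Cmul (RtoC Rr) z).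
Proof.
  intros HR Hg1 Hh1 z Hz. apply (deriv_unique (rescale Rr g) _ _ z (Hh1 z Hz)).
  apply rescale_deriv; [lra | apply Hg1, Dstar_scale; auto].
Qed.

Lemma rescale_second_deriv (Rr : R) (g g1 g2 h1 h2 : Cx -> Cx) :
  1 <= Rr -> (forall w, Dstar w -> is_cderiv g (g1 w) w) ->
  (forall w, Dstar w -> is_cderiv g1 (g2 w) w) ->
  (forall z, Dstar z -> is_cderiv (rescale Rr g) (h1 z) z) ->
  (forall z, Dstar z -> is_cderiv h1 (h2 z) z) ->
  forall z, Dstar z -> h2 z = Cmul (RtoC Rr) (g2 (Cmul (RtoC Rr) z)).
Proof.
  intros HR Hg1 Hg2 Hh1 Hh2 z Hz.
  pose proof (deriv_scale g1 _ z 1 Rr ltac:(lra) (Hg2 _ (Dstar_scale Rr z HR Hz))) as Hd.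
  rewrite Rmult_1_l in Hd.
  apply (deriv_unique h1 _ _ z (Hh2 z Hz)).
  apply (deriv_local (fun w => Cmul (RtoC 1) (g1 (Cmul (RtoC Rr) w))) h1 _ z (Cnorm z - 1));
    [unfold Dstar in Hz; lra | | exact Hd].
  (* near z, inside D^*, h1 coincides with g1 (R ·) *)
  intros h Hh. rewrite (rescale_first_deriv Rr g g1 h1 HR Hg1 Hh1) by (apply Dstar_open; auto).
  generalize (g1 (Cmul (RtoC Rr) (Cadd z h))). intro v. componentwise; ring.
Qed.

Lemma rescale_expansion (Rr : R) (g : Cx -> Cx) :
  0 < Rr -> expansion_at_infty g -> expansion_at_infty (rescale Rr g).
Proof.
  intros HR [r [phi [Hr [Hphi [H0 Hz]]]]].
  assert (HR' : 0 < / Rr) by (apply Rinv_0_lt_compat; lra).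
  exists (r * Rr), (fun u => Cmul (RtoC (/ Rr)) (phi (Cmul (RtoC (/ Rr)) u))).
  split; [nra | split; [| split]].
  - intros u Hu. destruct (Hphi (Cmul (RtoC (/ Rr)) u)) as [l Hl].
    { rewrite Cnorm_scale_pos by lra.
      apply Rmult_lt_reg_l with Rr; [lra|]. rewrite <- Rmult_assoc, Rinv_r by lra. lra. }
    eexists. apply deriv_scale; [lra | exact Hl].
  - replace (Cmul (RtoC (/ Rr)) C0) with C0 by (componentwise; ring).
    rewrite H0. componentwise; ring.
  - intros z Hrz. unfold rescale.
    rewrite Hz by (rewrite Cnorm_scale_pos by lra; lra).
    assert (Hz0 : z <> C0) by (intro E; rewrite E, Cnorm_C0 in Hrz; lra).
    rewrite Cinv_scale by (auto; lra).
    generalize (phi (Cmul (RtoC (/ Rr)) (Cinv z))). intro p.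
    componentwise; field; lra.
Qed.

Definition curly (s z G G1 G2 : Cx) : Cx :=
  Csub (Cmul (Csub Defs.C1 s) (Csub Defs.C1 (Cdiv (Cmul z G1) G))) (Cmul s (Cdiv (Cmul z G2) G1)).

Lemma Expr_curly (a b : R) (g g1 g2 : Cx -> Cx) (z : Cx) :
  Expr a b g g1 g2 z = Cadd (Cmul Ci (RtoC b))
    (Cmul (RtoC ((1 - Cnorm z ^ 2) * a)) (curly (a, b) z (g z) (g1 z) (g2 z))).
Proof. reflexivity. Qed.

Lemma curly_rescale (s z G G1 G2 : Cx) (c : R) : 0 < c -> G <> C0 ->
  curly s z (Cmul (RtoC (/ c)) G) G1 (Cmul (RtoC c) G2)
  = curly s (Cmul (RtoC c) z) G G1 G2.
Proof.
  intros Hc HG. unfold curly, Cdiv. rewrite Cinv_scale, Rinv_inv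
    by (auto; apply Rinv_neq_0_compat; lra).
  generalize (Cinv G) (Cinv G1). intros iG iG1. componentwise; ring.
Qed.

(* An expression A + (1 - t) a K is affine in t, so its modulus at t1 in
   (1, t2] is bounded by the larger of its moduli at t = 1 and t = t2. *)
Lemma affine_radial_bound (a t1 t2 M : R) (A K : Cx) :
  1 < t1 -> t1 <= t2 -> Cnorm A <= M ->
  Cnorm (Cadd A (Cmul (RtoC ((1 - t2) * a)) K)) <= M ->
  Cnorm (Cadd A (Cmul (RtoC ((1 - t1) * a)) K)) <= M.
Proof.
  intros H1 H2 HA HM.
  set (t := (t1 - 1) / (t2 - 1)).
  assert (Ht0 : 0 < t) by (unfold t; apply Rdiv_lt_0_compat; lra).
  assert (Ht1 : t <= 1).
  { unfold t. apply Rmult_le_reg_r with (t2 - 1); [lra|]. unfold Rdiv.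
    rewrite Rmult_assoc, Rinv_l by lra. lra. }
  assert (E : Cadd A (Cmul (RtoC ((1 - t1) * a)) K) =
    Cadd (Cmul (RtoC t) (Cadd A (Cmul (RtoC ((1 - t2) * a)) K))) (Cmul (RtoC (1 - t)) A))
    by (unfold t; componentwise; field; lra).
  rewrite E. eapply Rle_trans; [apply Cnorm_triangle|].
  rewrite !Cnorm_scale_pos by lra. nra.
Qed.

(* |b/s| <= k forces |b| <= a k |s| - |b| (a - 1), i.e. the value at |ζ| = 1
   satisfies the inequality. *)
Lemma b_le_bound (a b k : R) :
  1 <= a -> Cnorm (Cdiv (RtoC b) (a, b)) <= k ->
  Rabs b <= a * k * Cnorm (a, b) - Rabs b * (a - 1).
Proof.
  intros Ha Hbk.
  assert (Hs : (a, b) <> C0) by (intro E; unfold C0, RtoC in E; injection E; intros; lra).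
  pose proof (Cnorm_pos _ Hs) as Hsp.
  unfold Cdiv in Hbk. rewrite Cnorm_mul, Cnorm_RtoC, Cnorm_Cinv in Hbk by auto.
  assert (Rabs b <= k * Cnorm (a, b)).
  { apply Rmult_le_reg_r with (/ Cnorm (a, b)); [apply Rinv_0_lt_compat; auto|].
    rewrite Rmult_assoc, Rinv_r by lra. lra. }
  pose proof (Rabs_pos b). nra.
Qed.

Theorem lemma3 (a b k : R) (g g1 g2 : Cx -> Cx) :
  1 <= a -> 0 <= k < 1 ->
  Cnorm (Cdiv (RtoC b) (a, b)) <= k ->
  holo_on Dstar g ->
  expansion_at_infty g ->
  (forall z, Dstar z -> is_cderiv g (g1 z) z) ->
  (forall z, Dstar z -> is_cderiv g1 (g2 z) z) ->
  ineq_holds a b k g g1 g2 ->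
  forall Rr : R, 1 < Rr ->
    holo_on Dstar (rescale Rr g) /\
    expansion_at_infty (rescale Rr g) /\
    forall h1 h2 : Cx -> Cx,
      (forall z, Dstar z -> is_cderiv (rescale Rr g) (h1 z) z) ->
      (forall z, Dstar z -> is_cderiv h1 (h2 z) z) ->
      ineq_holds a b k (rescale Rr g) h1 h2.
Proof.
  intros Ha Hk Hbk Hg Hexp Hg1 Hg2 Hineq Rr HR.
  split; [apply rescale_holo; auto; lra|].
  split; [apply rescale_expansion; auto; lra|].
  intros h1 h2 Hh1 Hh2 z Hz.
  set (w := Cmul (RtoC Rr) z).
  assert (Hw : Dstar w) by (apply Dstar_scale; auto; lra).
  assert (Nw : Cnorm w = Rr * Cnorm z) by (apply Cnorm_scale_pos; lra).
  assert (Eh1 : h1 z = g1 w) by (apply (rescale_first_deriv Rr g); auto; lra).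
  assert (Eh2 : h2 z = Cmul (RtoC Rr) (g2 w))
    by (apply (rescale_second_deriv Rr g g1 g2 h1 h2); auto; lra).
  destruct (Hineq w Hw) as [Gn [G1n Hbound]].
  split; [|split; [rewrite Eh1; auto|]].
  - intro E. apply (f_equal Cnorm) in E. unfold rescale in E. fold w in E.
    rewrite Cnorm_scale_pos, Cnorm_C0 in E by (left; apply Rinv_0_lt_compat; lra).
    pose proof (Cnorm_pos _ Gn). pose proof (Rinv_0_lt_compat Rr ltac:(lra)). nra.
  - rewrite Expr_curly in Hbound |- *. rewrite Eh1, Eh2. unfold rescale.
    rewrite curly_rescale by (auto; lra).
    fold w. unfold Dstar in Hz.
    assert (Hzw : Cnorm z <= Cnorm w) by (rewrite Nw; nra).
    apply (affine_radial_bound a _ (Cnorm w ^ 2)); [nra | simpl; nra | | exact Hbound].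
    rewrite Cnorm_iR. apply b_le_bound; auto.
Qed.
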